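(* If $X$ is a connected, locally $\mathfrak{c}$, sequential Hausdorff space, then $|X|\le\mathfrak{c}$.
   Context: A space $X$ is locally $\mathfrak{c}$ if every point of $X$ has a neighbourhood of cardinality $\le\mathfrak{c}$. *)

From HB Require Import structures.
From mathcomp Require Import all_boot all_order all_algebra.
From mathcomp Require Import all_classical all_reals all_analysis.
Set Implicit Arguments. Unset Strict Implicit. Unset Printing Implicit Defensive.
Local Open Scope classical_set_scope.

(* The continuum c = 2^aleph_0, represented by the power set of nat. *)
Definition continuum_set : set (set nat) := [set: set nat].

Definition seq_closed (X : topologicalType) (A : set X) : Prop :=
  forall (u : nat -> X) (x : X), (forall n, A (u n)) -> u @ \oo --> x -> A x.

Definition sequential_space (X : topologicalType) : Prop :=
  forall A : set X, seq_closed A -> closed A.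

Definition locally_continuum (X : topologicalType) : Prop :=
  forall x : X, exists N : set X, nbhs x N /\ (N #<= continuum_set)%card.

From HB Require Import structures.
From mathcomp Require Import all_boot all_order all_algebra.
From mathcomp Require Import all_classical all_reals all_analysis.
Set Implicit Arguments.
Unset Strict Implicit.
Unset Printing Implicit Defensive.

Local Open Scope classical_set_scope.
Local Open Scope card_scope.

(* Fix a point x0 and, around every x, a neighbourhood N x injectively labelled
   by subsets of nat.  Build a set of points by transfinite recursion: start from
   x0, move from a point x to any point of N x (named by its label), and pass to
   limits of sequences.  The points reached form an open set (every N x is
   reached from x) which is sequentially closed (Hausdorff limits are unique),
   hence clopen since X is sequential, hence all of X by connectedness.  Each
   point is thus the value of a well-founded countably branching tree with labels
   in the continuum, and there are at most continuum many such trees. *)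

Inductive seq_tree :=
  | Root
  | Step of seq_tree & set nat
  | Limit of (nat -> seq_tree).

Fixpoint tag_at (t : seq_tree) (p : seq nat) (c : nat) : Prop :=
  match t with
  | Root => p = [::] /\ c = 0
  | Step t s =>
      match p with
      | [::] => c = 1 \/ exists2 k, c = k.+3 & s k
      | 0 :: q => tag_at t q c
      | _ => False
      end
  | Limit f => if p is n :: q then tag_at (f n) q c else c = 2
  end.

Definition tree_kind (t : seq_tree) : nat :=
  match t with Root => 0 | Step _ _ => 1 | Limit _ => 2 end.

Lemma tag_at_kind (t : seq_tree) : tag_at t [::] (tree_kind t).
Proof. by case: t => /=; auto. Qed.

Lemma tag_at_root {t : seq_tree} {c : nat} :
  tag_at t [::] c -> c <= 2 -> c = tree_kind t.
Proof. by case: t => [[]|t s [|[k ->]]|f] //= ->. Qed.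

Lemma tag_at_inj (t1 t2 : seq_tree) :
  (forall p c, tag_at t1 p c <-> tag_at t2 p c) -> t1 = t2.
Proof.
elim: t1 t2 => [|t IH s|f IH] t2 E;
  have := tag_at_root ((E _ _).1 (tag_at_kind _)) isT; case: t2 E => //.
- move=> t' s' E _; congr Step; first by apply: IH => q c; exact: E (0 :: q) c.
  apply/funext => k; apply/propext.
  have [Ek Ek'] := E [::] k.+3; split => sk.
  + by case: (Ek (or_intror (ex_intro2 _ _ k erefl sk))) => // -[j [->]].
  + by case: (Ek' (or_intror (ex_intro2 _ _ k erefl sk))) => // -[j [->]].
- move=> f' E _; congr Limit; apply/funext => n.
  by apply: IH => q c; exact: E (n :: q) c.
Qed.

Definition tree_code (t : seq_tree) : set nat :=
  pickle @` [set pc : seq nat * nat | tag_at t pc.1 pc.2].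

Lemma tree_code_inj : injective tree_code.
Proof.
have tag_at_code t1 t2 p c : tree_code t1 = tree_code t2 ->
    tag_at t1 p c -> tag_at t2 p c.
  move=> E t1pc; have : tree_code t2 (pickle (p, c)) by rewrite -E; exists (p, c).
  by case=> -[p' c'] /= t2pc /(pcan_inj pickleK) [<- <-].
by move=> t1 t2 E; apply: tag_at_inj => p c; split; apply: tag_at_code.
Qed.

Lemma card_seq_tree : [set: seq_tree] #<= continuum_set.
Proof. by apply/pcard_leP/injfunPex; exists tree_code => // t1 t2 _ _ /tree_code_inj. Qed.

Lemma connected_clopenT (X : topologicalType) (A : set X) :
  connected [set: X] -> A !=set0 -> open A -> closed A -> A = [set: X].
Proof.
by move=> conX A0 oA cA; apply: conX => //; exists A => //; rewrite setTI.
Qed.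

Section SequentialReach.
Variables (X : topologicalType) (x0 : X).
Variables (nbhd : X -> set X) (label : X -> X -> set nat).
Hypothesis nbhd_nbhs : forall x, nbhs x (nbhd x).
Hypothesis label_inj : forall x, set_inj (nbhd x) (label x).

Definition step (x : X) (s : set nat) : X :=
  xget x [set z | nbhd x z /\ label x z = s].

Fixpoint reach (t : seq_tree) : X :=
  match t with
  | Root => x0
  | Step t s => step (reach t) s
  | Limit f => xget x0 [set y | (fun n => reach (f n)) @ \oo --> y]
  end.

Lemma step_label (x z : X) : nbhd x z -> step x (label x z) = z.
Proof.
move=> xz; apply: xget_unique => [//|w [xw lw]].
by apply: (@label_inj x) lw; rewrite inE.
Qed.

Lemma reach_Limit (f : nat -> seq_tree) (y : X) : hausdorff_space X ->
  (fun n => reach (f n)) @ \oo --> y -> reach (Limit f) = y.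
Proof. by move=> hsdX fy; apply: xget_subset1 => //; exact: cvg_unique. Qed.

Lemma open_range_reach : open (range reach).
Proof.
rewrite openE => _ [t _ <-]; apply: filterS (@nbhd_nbhs (reach t)) => z tz.
by exists (Step t (label (reach t) z)) => //=; rewrite step_label.
Qed.

Lemma seq_closed_range_reach : hausdorff_space X -> seq_closed (range reach).
Proof.
move=> hsdX u y ru uy.
have ru' n : exists t, reach t = u n by have [t _ <-] := ru n; exists t.
have [f fu] := choice ru'.
by exists (Limit f) => //; apply: reach_Limit => //; rewrite (funext fu).
Qed.

End SequentialReach.

Theorem corollary4p4 (X : topologicalType) :
  connected [set: X] -> locally_continuum X -> sequential_space X ->
  hausdorff_space X -> ([set: X] #<= continuum_set)%card.
Proof.
move=> conX locX seqX hsdX.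
have [->|/set0P [x0 _]] := eqVneq [set: X] set0; first exact: card_ge0.
have labelled (x : X) : exists NL : set X * (X -> set nat),
    nbhs x NL.1 /\ set_inj NL.1 NL.2.
  have [N [xN /pcard_leP/injfunPex [g _ gN]]] := locX x.
  by exists (N, g).
have [NL NLP] := choice labelled.
pose rch := reach x0 (fun x => (NL x).1) (fun x => (NL x).2).
have rchT : range rch = [set: X].
  apply: connected_clopenT => //; first by exists x0, Root.
  - exact: open_range_reach (fun x : X => (NLP x).1) (fun x : X => (NLP x).2).
  - by apply: seqX; apply: seq_closed_range_reach.
have /Psurj [g _] : set_surj [set: seq_tree] [set: X] rch by rewrite -rchT.
exact: card_le_trans (surj_card_ge g) card_seq_tree.
Qed.
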